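(* Let $A, B$ be $2n\times 2n$ real symmetric positive semidefinite matrices whose kernels are symplectic subspaces of $\mathbb{R}^{2n}$. If $d(A) \prec d(B)$, then there exist real symplectic matrices $M_\pi \in \operatorname{Sp}(2n)$, indexed by $\pi \in S_n$, and a probability vector $(p(\pi))_{\pi\in S_n}$ (non-negative entries summing to $1$) such that $$A = \sum_{\pi \in S_n} p(\pi)\, M_\pi^T B M_\pi .$$ In particular, $A$ lies in the convex hull of the symplectic orbit $\{M^TBM : M \in \operatorname{Sp}(2n)\}$ of $B$.
   Context: Let $J = \begin{bmatrix} 0 & I_n \\ -I_n & 0\end{bmatrix}$. A real $2n\times 2n$ matrix $M$ is symplectic if $M^TJM = J$; $\operatorname{Sp}(2n)$ denotes the group of such matrices. A linear subspace $W\subseteq\mathbb{R}^{2n}$ is symplectic if for every $0\neq u\in W$ there is $v\in W$ with $u^TJv\neq 0$. For a real symmetric positive semidefinite $2n\times 2n$ matrix $A$ whose kernel is a symplectic subspace, there is $M\in\operatorname{Sp}(2n)$ with $M^TAM = D\oplus D$ where $D$ is an $n\times n$ diagonal matrix with non-negative entries, unique up to permutation of its diagonal entries (generalized Williamson theorem); these diagonal entries are the symplectic eigenvalues of $A$, and $d(A) = (d_1(A),\dots,d_n(A))$ denotes them arranged in non-decreasing order. $S_n$ is the symmetric group on $\{1,\dots,n\}$. For $x\in\mathbb{R}^n$, $x^\uparrow$ denotes $x$ with entries rearranged in non-decreasing order. For $x,y\in\mathbb{R}^n$, $x\prec y$ ($x$ is majorized by $y$) means $\sum_{j=1}^k x^\uparrow_j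 \ge \sum_{j=1}^k y^\uparrow_j$ for $1\le k\le n$, with equality for $k=n$. *)

From HB Require Import structures.
From mathcomp Require Import all_boot all_order all_algebra all_fingroup.
From mathcomp Require Import reals.
Set Implicit Arguments. Unset Strict Implicit. Unset Printing Implicit Defensive.
Import Order.TTheory GRing.Theory Num.Theory.
Local Open Scope ring_scope.

Definition Jmx (R : realType) (n : nat) : 'M[R]_(n + n) :=
  block_mx 0 1%:M (- 1%:M) 0.

Definition symplectic (R : realType) (n : nat) (M : 'M[R]_(n + n)) : Prop :=
  M^T *m Jmx R n *m M = Jmx R n.

Definition sym_psd (R : realType) (m : nat) (A : 'M[R]_m) : Prop :=
  A^T = A /\ forall x : 'cV[R]_m, 0 <= (x^T *m A *m x) 0 0.

(* the kernel {u | A u = 0} of A is a symplectic subspace *)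
Definition symplectic_kernel (R : realType) (n : nat) (A : 'M[R]_(n + n)) : Prop :=
  forall u : 'cV[R]_(n + n), A *m u = 0 -> u != 0 ->
    exists2 v : 'cV[R]_(n + n), A *m v = 0 & (u^T *m Jmx R n *m v) 0 0 != 0.

(* d is the vector d(A) of symplectic eigenvalues of A, in non-decreasing
   order: d >= 0, sorted, and M^T A M = D (+) D for some symplectic M with
   D = diag(d).  (By the generalized Williamson theorem such d exists and is
   unique when A is psd with symplectic kernel.) *)
Definition symp_eigs (R : realType) (n : nat) (A : 'M[R]_(n + n)) (d : 'rV[R]_n)
  : Prop :=
  (forall i, 0 <= d 0 i) /\
  (forall i j : 'I_n, (i <= j)%N -> d 0 i <= d 0 j) /\
  exists2 M : 'M[R]_(n + n), symplectic M &
    M^T *m A *m M = block_mx (diag_mx d) 0 0 (diag_mx d).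

Definition sort_up (R : realType) (n : nat) (x : 'rV[R]_n) : seq R :=
  sort <=%R [seq x 0 i | i <- enum 'I_n].

Definition majorized (R : realType) (n : nat) (x y : 'rV[R]_n) : Prop :=
  (forall k : nat, (1 <= k <= n)%N ->
     \sum_(0 <= j < k) (sort_up y)`_j <= \sum_(0 <= j < k) (sort_up x)`_j) /\
  \sum_(0 <= j < n) (sort_up x)`_j = \sum_(0 <= j < n) (sort_up y)`_j.

From HB Require Import structures.
From mathcomp Require Import all_boot all_order all_algebra all_fingroup.
From mathcomp Require Import reals.
From mathcomp Require Import lra zify.
Import Order.TTheory GRing.Theory Num.Theory.
Local Open Scope ring_scope.
Set Implicit Arguments. Unset Strict Implicit. Unset Printing Implicit Defensive.

(* If d(A) is majorized by d(B), then d(A) is a convex combination of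
   permutations of d(B) (Rado): starting from d(B), finitely many transfers
   moving mass from a larger entry to a smaller one reach d(A), and each
   transfer is a convex combination of the identity and a transposition.
   A permutation s of the symplectic spectrum is realised by the symplectic
   matrix P_s (+) P_s, so the Williamson normal form of A is a convex
   combination of symplectic congruences of that of B; undoing the Williamson
   congruence of A gives the decomposition. *)

Section PermutationHull.
Variables (R : realFieldType) (n : nat).
Implicit Types (x y : 'I_n -> R).

Definition perm_hull x y := exists p : 'S_n -> R,
  [/\ forall s, 0 <= p s, \sum_s p s = 1 & forall i, x i = \sum_s p s * y (s i)].

Lemma sum_delta_perm (a : 'S_n) (f : 'S_n -> R) : \sum_s (a == s)%:R * f s = f a.
Proof.
rewrite (bigD1 a) //= eqxx mul1r big1 ?addr0 // => s.
by rewrite eq_sym => /negbTE ->; rewrite mul0r.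
Qed.

Lemma sum_delta_perm1 (a : 'S_n) : \sum_s ((a == s)%:R : R) = 1.
Proof.
by rewrite -[RHS](sum_delta_perm a (fun=> 1)); apply: eq_bigr => s _; rewrite mulr1.
Qed.

Lemma perm_hull_refl x y : x =1 y -> perm_hull x y.
Proof.
move=> exy; exists (fun s => ((1%g : 'S_n) == s)%:R); split.
- by move=> s; rewrite ler0n.
- exact: sum_delta_perm1.
- by move=> i; rewrite sum_delta_perm perm1 exy.
Qed.

Lemma perm_hull_trans x y z : perm_hull x y -> perm_hull y z -> perm_hull x z.
Proof.
move=> [p [p0 p1 hp]] [q [q0 q1 hq]].
exists (fun u => \sum_s \sum_t ((s * t)%g == u)%:R * (p s * q t)); split.
- move=> u; apply: sumr_ge0 => s _; apply: sumr_ge0 => t _.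
  by apply: mulr_ge0; [rewrite ler0n | apply: mulr_ge0].
- rewrite exchange_big /=.
  under eq_bigr => s _ do rewrite exchange_big /=.
  under eq_bigr => s _ do under eq_bigr => t _ do rewrite sum_delta_perm.
  under eq_bigr => s _ do rewrite -mulr_sumr q1 mulr1.
  exact: p1.
- move=> i; rewrite hp.
  under [RHS]eq_bigr => u _ do rewrite mulr_suml.
  rewrite exchange_big /=; apply: eq_bigr => s _.
  under eq_bigr => u _ do rewrite mulr_suml.
  rewrite exchange_big /= hq mulr_sumr; apply: eq_bigr => t _.
  under eq_bigr => u _ do rewrite -mulrA.
  by rewrite sum_delta_perm permM mulrA.
Qed.

Definition transfer y (j k : 'I_n) (d : R) : 'I_n -> R :=
  fun i => y i + d * ((i == j)%:R - (i == k)%:R).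

(* With mu = d / (y k - y j), the transfer is (1 - mu) y + mu (y o (j k)). *)
Lemma perm_hull_transfer y (j k : 'I_n) (d : R) :
  j != k -> y j < y k -> 0 <= d <= y k - y j -> perm_hull (transfer y j k d) y.
Proof.
move=> njk ljk /andP[d0 d1].
have gap_gt0 : 0 < y k - y j by rewrite subr_gt0.
set mu := d / (y k - y j).
have mu0 : 0 <= mu by rewrite divr_ge0 // ltW.
have mu1 : mu <= 1 by rewrite ler_pdivrMr // mul1r.
have dmu : d = mu * (y k - y j) by rewrite /mu divfK // gt_eqF.
clearbody mu.
exists (fun s => (1 - mu) * ((1%g : 'S_n) == s)%:R + mu * (tperm j k == s)%:R).
split.
- by move=> s; apply: addr_ge0; apply: mulr_ge0; rewrite ?ler0n ?subr_ge0.
- by rewrite big_split /= -!mulr_sumr !sum_delta_perm1 !mulr1 subrK.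
- move=> i; under eq_bigr => s _ do rewrite mulrDl -!mulrA.
  rewrite big_split /= -!mulr_sumr !sum_delta_perm perm1 /transfer dmu.
  case: (tpermP j k i) => [->|->|/eqP nij /eqP nik].
  + rewrite eqxx (negbTE njk) /=; lra.
  + rewrite eqxx eq_sym (negbTE njk) /=; lra.
  + rewrite (negbTE nij) (negbTE nik) /=; lra.
Qed.

Definition psum (m : nat) y := \sum_(i < n | (i < m)%N) y i.

Lemma psumS (i : 'I_n) y : psum i.+1 y = psum i y + y i.
Proof.
rewrite /psum (bigD1 i) ?ltnSn //= addrC; congr (_ + _); apply: eq_bigl => l.
by rewrite ltnS ltn_neqAle andbC.
Qed.

Lemma psum_transfer m y (j k : 'I_n) d :
  psum m (transfer y j k d) = psum m y + d * ((j < m)%:R - (k < m)%:R).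
Proof.
have psum_delta (l : 'I_n) : \sum_(i < n | (i < m)%N) ((i == l)%:R : R) = (l < m)%:R.
  case: (boolP (l < m)%N) => hl.
    rewrite (bigD1 l) //= eqxx big1 ?addr0 // => i /andP[_ /negbTE ->]//.
  apply: big1 => i hi; case: eqP => [eil|//]; by move: hl; rewrite -eil hi.
by rewrite /psum /transfer big_split /= -mulr_sumr sumrB !psum_delta.
Qed.

(* [x \prec y] in prefix-sum form, meaningful for [x] sorted non-decreasingly. *)
Definition prefix_majorized x y :=
  (forall m, (m <= n)%N -> psum m y <= psum m x) /\ psum n y = psum n x.

Lemma transfer_prefix_majorized x y (j k : 'I_n) d :
  prefix_majorized x y -> (j < k)%N -> (forall i : 'I_n, (j < i < k)%N -> x i = y i) ->
  0 <= d <= x j - y j -> prefix_majorized x (transfer y j k d).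
Proof.
move=> [hp he] jk between /andP[d0 dj]; split; last first.
  by rewrite psum_transfer !ltn_ord subrr mulr0 addr0.
move=> m hm; rewrite psum_transfer.
case: (ltnP j m) => hjm; last first.
  have -> : (k < m)%N = false by apply/negbTE; rewrite -leqNgt; lia.
  by rewrite subrr mulr0 addr0; apply: hp.
case: (ltnP k m) => hkm; first by rewrite subrr mulr0 addr0; apply: hp.
have gap : psum m x - psum m y = psum j x - psum j y + (x j - y j).
  have -> : psum j x - psum j y + (x j - y j) = psum j.+1 x - psum j.+1 y.
    by rewrite !psumS; lra.
  rewrite /psum -!sumrB [LHS]big_mkcond [RHS]big_mkcond /=.
  apply: eq_bigr => i _.
  case: (ltnP i j.+1) => h1; case: (ltnP i m) => h2 //=; try lia.
  by rewrite (between i) ?subrr //; lia.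
rewrite /= subr0 mulr1; have := hp j (ltnW (ltn_ord j)); lra.
Qed.

Section Sorted.
Variable x : 'I_n -> R.
Hypothesis x_sorted : forall i j : 'I_n, (i <= j)%N -> x i <= x j.

Lemma exists_excess y : psum n y = psum n x -> (exists i, x i != y i) ->
  exists k, x k < y k.
Proof.
move=> he [i0 hi0].
case: (boolP [exists k, x k < y k]) => [/existsP//|/existsPn hn].
have hle i : 0 <= x i - y i by rewrite subr_ge0 leNgt hn.
have : \sum_(i < n | (i < n)%N) (x i - y i) = 0 by rewrite sumrB -/(psum n x) -/(psum n y) he subrr.
move/(psumr_eq0P (fun i _ => hle i))/(_ i0 (ltn_ord i0))/eqP.
by rewrite subr_eq0 (negbTE hi0).
Qed.

(* The transfer goes from the first index [k] where [y] exceeds [x] to the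
   last index [j < k] where [y] falls short of [x], by the smaller of the two
   discrepancies, so that [y] agrees with [x] at one more index. *)
Lemma majorization_step y : prefix_majorized x y -> (exists i, x i != y i) ->
  exists y', [/\ perm_hull y' y, prefix_majorized x y' &
                 (#|[set i | x i != y' i]| < #|[set i | x i != y i]|)%N].
Proof.
move=> [hp he] neq.
have [k0 hk0] := exists_excess he neq.
case: (@arg_minnP _ k0 (fun i => x i < y i) val hk0) => k hk kmin.
have [j0 hj0] : exists j : 'I_n, (j < k)%N && (y j < x j).
  case: (boolP [exists j : 'I_n, (j < k)%N && (y j < x j)]) => [/existsP//|/existsPn hn].
  have : psum k x <= psum k y.
    by apply: ler_sum => i hi; move: (hn i); rewrite hi /= -leNgt.
  have := hp k.+1 (ltn_ord k); rewrite !psumS; lra.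
case: (@arg_maxnP _ j0 (fun i => (i < k)%N && (y i < x i)) val hj0).
move=> j /andP [jk hj] jmax.
have between (i : 'I_n) : (j < i < k)%N -> x i = y i.
  move=> /andP[h1 h2]; apply/eqP; rewrite eq_le; apply/andP; split.
    rewrite leNgt; apply/negP => h3; have := jmax i; rewrite h2 h3 => /(_ isT).
    by move=> hij; move: (leq_ltn_trans hij h1); rewrite ltnn.
  by rewrite leNgt; apply/negP => /kmin; rewrite leqNgt h2.
have xjk : x j <= x k by apply: x_sorted; apply: ltnW.
have njk : j != k by apply/eqP => ejk; move: jk; rewrite ejk ltnn.
have [d [d0 dj dk dw]] : exists d, [/\ 0 < d, d <= x j - y j, d <= y k - x k &
   d = x j - y j \/ d = y k - x k].
  by case: (leP (x j - y j) (y k - x k)) => h;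
    [exists (x j - y j) | exists (y k - x k)]; split; lra.
exists (transfer y j k d); split.
- by apply: perm_hull_transfer => //; [lra | apply/andP; split; lra].
- by apply: transfer_prefix_majorized => //; apply/andP; split; lra.
apply: proper_card; apply/properP; split.
  apply/subsetP => i; rewrite !inE /transfer.
  case: (eqVneq i j) => [->|nij]; first by rewrite (gt_eqF hj).
  case: (eqVneq i k) => [->|nik]; first by rewrite (lt_eqF hk).
  by rewrite subrr mulr0 addr0.
case: dw => dw; [exists j | exists k]; rewrite !inE ?(gt_eqF hj) ?(lt_eqF hk) //=.
  by rewrite negbK /transfer eqxx (negbTE njk) dw subr0 mulr1; apply/eqP; lra.
rewrite negbK /transfer eqxx [k == j]eq_sym (negbTE njk) dw sub0r mulrN1; apply/eqP; lra.
Qed.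

Lemma prefix_majorized_perm_hull y : prefix_majorized x y -> perm_hull x y.
Proof.
move: {2}#|_| (leqnn #|[set i | x i != y i]|) => N.
elim: N y => [|N IH] y hN hmaj.
  apply: perm_hull_refl => i; apply/eqP.
  move: hN; rewrite leqn0 cards_eq0 => /eqP/setP/(_ i).
  by rewrite inE in_set0 => /negbFE.
case: (boolP [exists i, x i != y i]) => [/existsP neq | /existsPn heq]; last first.
  by apply: perm_hull_refl => i; move/negbNE/eqP: (heq i).
have [y' [hy' hmaj' hcard]] := majorization_step hmaj neq.
by apply: perm_hull_trans (IH y' _ hmaj') hy'; rewrite -ltnS (leq_trans hcard).
Qed.

End Sorted.
End PermutationHull.

Section SortedSpectrum.
Variables (R : realType) (n : nat).

Lemma nth_map_enum_ord (f : 'I_n -> R) i (hi : (i < n)%N) :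
  [seq f j | j <- enum 'I_n]`_i = f (Ordinal hi).
Proof.
rewrite (nth_map (Ordinal hi)) ?size_enum_ord //.
by change i with (nat_of_ord (Ordinal hi)); rewrite nth_ord_enum.
Qed.

Lemma sort_up_id (d : 'rV[R]_n) :
  (forall i j : 'I_n, (i <= j)%N -> d 0 i <= d 0 j) ->
  sort_up d = [seq d 0 j | j <- enum 'I_n].
Proof.
move=> hs; apply: sorted_sort; first exact: le_trans.
apply/(sortedP 0) => i; rewrite size_map size_enum_ord => hi.
by rewrite (nth_map_enum_ord _ (ltnW hi)) (nth_map_enum_ord _ hi); apply: hs.
Qed.

Lemma sum_map_enum_ord (f : 'I_n -> R) k : (k <= n)%N ->
  \sum_(0 <= j < k) [seq f j | j <- enum 'I_n]`_j = psum k f.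
Proof.
move=> hk; rewrite /psum.
transitivity (\sum_(i < n | (i < k)%N) [seq f j | j <- enum 'I_n]`_i).
  rewrite -(big_mkord (fun i => i < k)%N) (big_nat_widen 0 _ _ _ _ hk).
  by apply: eq_bigl.
apply: eq_bigr => i _; rewrite (nth_map_enum_ord f (ltn_ord i)); congr f; exact: val_inj.
Qed.

Lemma majorized_sorted (x y : 'rV[R]_n) :
  (forall i j : 'I_n, (i <= j)%N -> x 0 i <= x 0 j) ->
  (forall i j : 'I_n, (i <= j)%N -> y 0 i <= y 0 j) ->
  majorized x y -> prefix_majorized (fun i => x 0 i) (fun i => y 0 i).
Proof.
move=> xs ys [hpre htot]; rewrite (sort_up_id xs) (sort_up_id ys) in hpre htot.
split; last by rewrite -!sum_map_enum_ord.
case=> [|m] hm; first by rewrite /psum !big_pred0.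
by rewrite -!sum_map_enum_ord //; apply: hpre.
Qed.

End SortedSpectrum.

Section SymplecticGroup.
Variables (R : realType) (n : nat).
Local Notation J := (Jmx R n).

Lemma symplecticM (M N : 'M[R]_(n + n)) :
  symplectic M -> symplectic N -> symplectic (M *m N).
Proof.
rewrite /symplectic => hM hN.
by rewrite trmx_mul -!mulmxA (mulmxA M^T) (mulmxA (M^T *m J)) hM !mulmxA.
Qed.

Lemma mulJJ : J *m J = - 1%:M.
Proof.
rewrite /Jmx mulmx_block !(mul0mx, mulmx0, mulmx1, mulmxN, addr0, add0r).
by rewrite (scalar_mx_block n n 1) opp_block_mx !oppr0.
Qed.

Lemma symplectic_inv (M : 'M[R]_(n + n)) : symplectic M ->
  exists L, [/\ L *m M = 1%:M, M *m L = 1%:M & symplectic L].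
Proof.
move=> hM; exists (- (J *m M^T *m J)).
have hL : - (J *m M^T *m J) *m M = 1%:M.
  by rewrite mulNmx -!mulmxA (mulmxA M^T) hM mulJJ opprK.
have hL' := mulmx1C hL.
set L := - _ in hL hL' *.
split => //; rewrite /symplectic -{1}hM.
by rewrite !mulmxA -trmx_mul hL' trmx1 mul1mx -mulmxA hL' mulmx1.
Qed.

Definition perm_symp (s : 'S_n) : 'M[R]_(n + n) :=
  block_mx (perm_mx s)^T 0 0 (perm_mx s)^T.

Lemma tr_perm_symp s : (perm_symp s)^T = block_mx (perm_mx s) 0 0 (perm_mx s).
Proof. by rewrite /perm_symp tr_block_mx !trmxK !trmx0. Qed.

Lemma perm_symp_symplectic s : symplectic (perm_symp s).
Proof.
have PPT : perm_mx s *m (perm_mx s)^T = 1%:M :> 'M[R]_n.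
  by rewrite tr_perm_mx -perm_mxM mulgV perm_mx1.
rewrite /symplectic tr_perm_symp /perm_symp /Jmx !mulmx_block.
by rewrite !(mul0mx, mulmx0, mulmx1, mulmxN, addr0, add0r, mulNmx) PPT.
Qed.

Lemma perm_symp_diag (s : 'S_n) (d : 'rV[R]_n) :
  (perm_symp s)^T *m block_mx (diag_mx d) 0 0 (diag_mx d) *m perm_symp s =
  block_mx (diag_mx (\row_i d 0 (s i))) 0 0 (diag_mx (\row_i d 0 (s i))).
Proof.
have Pd : perm_mx s *m diag_mx d *m (perm_mx s)^T = diag_mx (\row_i d 0 (s i)).
  rewrite tr_perm_mx -mulmxA -col_permE -row_permE.
  apply/matrixP => i j; rewrite !mxE (inj_eq perm_inj).
  by case: eqP => [->|_]; rewrite ?mxE.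
by rewrite tr_perm_symp /perm_symp !mulmx_block !(mul0mx, mulmx0, addr0, add0r) Pd.
Qed.

End SymplecticGroup.

Lemma block_diag_sum (R : pzRingType) (n : nat) (I : finType)
    (p : I -> R) (X : I -> 'M[R]_n) :
  block_mx (\sum_i p i *: X i) 0 0 (\sum_i p i *: X i) =
  \sum_i p i *: block_mx (X i) 0 0 (X i).
Proof.
apply: (big_rec2 (fun a b => block_mx a 0 0 a = b)); first by rewrite block_mx0.
by move=> i a b _ <-; rewrite scale_block_mx add_block_mx !scaler0 !addr0.
Qed.

Lemma diag_mx_perm_hull (R : pzRingType) (n : nat) (x y : 'rV[R]_n) (p : 'S_n -> R) :
  (forall i, x 0 i = \sum_s p s * y 0 (s i)) ->
  diag_mx x = \sum_s p s *: diag_mx (\row_i y 0 (s i)).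
Proof.
move=> hp; apply/matrixP => i j; rewrite summxE !mxE.
case: eqP => [<-|/eqP nij].
  by rewrite mulr1n hp; apply: eq_bigr => s _; rewrite !mxE eqxx mulr1n.
by rewrite mulr0n big1 // => s _; rewrite !mxE (negbTE nij) mulr0n mulr0.
Qed.

(* The psd and symplectic-kernel hypotheses only serve to guarantee the
   Williamson normal forms, which [symp_eigs] already provides. *)
Theorem theorem3p1 (R : realType) (n : nat) (A B : 'M[R]_(n + n))
  (dA dB : 'rV[R]_n) :
  sym_psd A -> sym_psd B ->
  symplectic_kernel A -> symplectic_kernel B ->
  symp_eigs A dA -> symp_eigs B dB ->
  majorized dA dB ->
  exists (p : 'S_n -> R) (M : 'S_n -> 'M[R]_(n + n)),
    [/\ forall s, 0 <= p s,
        \sum_(s : 'S_n) p s = 1,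
        forall s, symplectic (M s) &
        A = \sum_(s : 'S_n) p s *: ((M s)^T *m B *m M s)].
Proof.
move=> _ _ _ _ [_ [dAs [MA hMA eA]]] [_ [dBs [MB hMB eB]]] hmaj.
have [p [p0 p1 hp]] := prefix_majorized_perm_hull dAs (majorized_sorted dAs dBs hmaj).
have [L [hLM hML hL]] := symplectic_inv hMA.
exists p, (fun s => MB *m perm_symp R s *m L); split => //.
  by move=> s; do 2![apply: symplecticM => //]; apply: perm_symp_symplectic.
have -> : A = L^T *m block_mx (diag_mx dA) 0 0 (diag_mx dA) *m L.
  have LMA : L^T *m MA^T = 1%:M by rewrite -trmx_mul hML trmx1.
  by rewrite -eA !mulmxA LMA mul1mx -mulmxA hML mulmx1.
rewrite (diag_mx_perm_hull hp) block_diag_sum.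
under eq_bigr => s _ do rewrite -perm_symp_diag -eB.
rewrite mulmx_sumr mulmx_suml; apply: eq_bigr => s _.
by rewrite -scalemxAr -scalemxAl !trmx_mul !mulmxA.
Qed.
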